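(* Let $(\Omega,P)$ be a 2-class attributed random graph model and let $y(x)=(\phi'_G\circ\sigma\circ\phi_G)[X](i)$ be any generalized two-layer GCN without bias on $\Omega$ (with $\phi,\phi'$ linear un-biased aggregators, $\phi'$ mapping into $\mathbb{R}$, $\sigma$ the ReLU). Assume the relevant costs are finite. If $\Omega$ is class-symmetric about the origin, then $$C(L[y])\le C(y).$$ Furthermore, if $\Omega$ is symmetric about a subspace $S\subseteq\mathbb{R}^{m_{\mathrm{feat}}}$, then $$C(P_S[L[y]])\le C(L[y]).$$
   Context: A 2-class attributed random graph model is a probability space $(\Omega,P)$ of tuples $x=(G,i,v,X)$ where $G$ is a graph, $i$ is a node of $G$, $v:V(G)\to\{-1,1\}$ assigns classes and $X:V(G)\to\mathbb{R}^{m_{\mathrm{feat}}}$ assigns feature vectors; write $v(x)=v(i)$. Negation: $-x=(G,i,-v,-X)$ and $-F=\{-x:x\in F\}$. $\Omega$ is class-symmetric about the origin if $P(F)=P(-F)$ for all measurable $F\subseteq\Omega$. For a subspace $S\subseteq\mathbb{R}^{m_{\mathrm{feat}}}$, let $P_S$ be orthogonal projection onto $S$, $P_\perp=I-P_S$, and $R_S=P_S-P_\perp$ reflection across $S$; set $R_S(x)=(G,i,v,R_S\circ X)$ and $R_S(F)=\{R_S(x):x\in F\}$. $\Omega$ is symmetric about $S$ if $P(R_S(F))=P(F)$ for all measurable $F$. A model $y$ assigns a real number $y(x)$ to each $x\in\Omega$; its cost is $C(y)=\mathbb{E}_{x\sim\Omega}[-\log P(v(x):y(x))]$, where $P(v(x):y(x))=\sigma_s(y(x))$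 if $v(x)=1$ and $1-\sigma_s(y(x))$ if $v(x)=-1$, with $\sigma_s(z)=1/(1+e^{-z})$. A graph aggregation $\phi$ maps $(G,X)$ to new features $X':V(G)\to\mathbb{R}^l$; $\phi_G=\phi(G,\cdot)$; it is linear un-biased if $\phi_G(X_1+X_2)=\phi_G(X_1)+\phi_G(X_2)$ for all $G,X_1,X_2$ (and consequently commutes with scalar multiplication by $-1$, as used). A generalized two-layer GCN without bias is $y(x)=(\phi'_G\circ\sigma\circ\phi_G)[X](i)$ with $\sigma$ the ReLU applied entrywise. Its linear approximation is $L[y](x)=\tfrac12(\phi'_G\circ\phi_G)[X](i)$, and the projection of this onto $S$ is $P_S[L[y]](x)=\tfrac12(\phi'_G\circ\phi_G\circ P_S)[X](i)$. *)

From HB Require Import structures.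
From mathcomp Require Import all_boot all_order all_algebra.
From mathcomp Require Import all_classical all_reals all_analysis.
Set Implicit Arguments. Unset Strict Implicit. Unset Printing Implicit Defensive.
Import Order.TTheory GRing.Theory Num.Theory.
Local Open Scope ring_scope.
Local Open Scope classical_set_scope.

(* A sample x = (G, i, v, X) of a 2-class attributed random graph model.
   G is a (directed, possibly with loops: arbitrary) graph on the vertex set
   'I_n given by its adjacency relation; i is a node; v assigns classes in
   {-1,1} (encoded as bool: true = +1, false = -1); X assigns feature vectors
   in R^m (row vectors). *)
Record sample (R : realType) (m : nat) := Sample {
  s_n : nat;
  s_adj : rel 'I_s_n;
  s_node : 'I_s_n;
  s_cls : 'I_s_n -> bool;
  s_feat : 'I_s_n -> 'rV[R]_m }.

Arguments s_n {R m}.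
Arguments s_adj {R m}.
Arguments s_node {R m}.
Arguments s_cls {R m}.
Arguments s_feat {R m}.

Section SampleInstances.
Variables (R : realType) (m : nat).
HB.instance Definition _ := gen_eqMixin (sample R m).
HB.instance Definition _ := gen_choiceMixin (sample R m).
HB.instance Definition _ := isPointed.Build (sample R m)
  (@Sample R m 1 (fun _ _ => false) ord0 (fun _ => true) (fun _ => 0)).
End SampleInstances.

Definition cls_val (R : realType) (m : nat) (x : sample R m) : bool :=
  s_cls x (s_node x).

Definition neg_sample (R : realType) (m : nat) (x : sample R m) : sample R m :=
  @Sample R m (s_n x) (s_adj x) (s_node x)
    (fun j => ~~ s_cls x j) (fun j => - s_feat x j).

Definition neg_set (R : realType) (m : nat) (F : set (sample R m)) :=
  [set neg_sample x | x in F].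

(* orthogonal projection: Pm is the (right-multiplication) matrix of the
   orthogonal projection of R^m onto the row space S *)
Definition is_orth_proj (R : realType) (m : nat) (S Pm : 'M[R]_m) : Prop :=
  forall u : 'rV[R]_m,
    (u *m Pm <= S)%MS /\
    forall w : 'rV[R]_m, (w <= S)%MS -> (u - u *m Pm) *m w^T = 0.

(* reflection R_S = P_S - P_perp = 2 P_S - I, acting on features *)
Definition refl_sample (R : realType) (m : nat) (Pm : 'M[R]_m)
  (x : sample R m) : sample R m :=
  @Sample R m (s_n x) (s_adj x) (s_node x) (s_cls x)
    (fun j => s_feat x j *m (Pm - (1%:M - Pm))).

Definition refl_set (R : realType) (m : nat) (Pm : 'M[R]_m)
  (F : set (sample R m)) := [set refl_sample Pm x | x in F].

Definition aggregation (R : realType) (m l : nat) :=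
  forall n : nat, rel 'I_n -> ('I_n -> 'rV[R]_m) -> ('I_n -> 'rV[R]_l).

Definition aggregation_R (R : realType) (l : nat) :=
  forall n : nat, rel 'I_n -> ('I_n -> 'rV[R]_l) -> ('I_n -> R).

Definition lin_unbiased (R : realType) (m l : nat) (phi : aggregation R m l) :=
  forall n (G : rel 'I_n) (X1 X2 : 'I_n -> 'rV[R]_m) (j : 'I_n),
    phi n G (fun k => X1 k + X2 k) j = phi n G X1 j + phi n G X2 j.

Definition lin_unbiased_R (R : realType) (l : nat) (phi : aggregation_R R l) :=
  forall n (G : rel 'I_n) (X1 X2 : 'I_n -> 'rV[R]_l) (j : 'I_n),
    phi n G (fun k => X1 k + X2 k) j = phi n G X1 j + phi n G X2 j.

Definition relu (R : realType) (l : nat) (u : 'rV[R]_l) : 'rV[R]_l :=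
  map_mx (fun z => Num.max z 0) u.

Definition gcn2 (R : realType) (m l : nat) (phi : aggregation R m l)
  (phi' : aggregation_R R l) (x : sample R m) : R :=
  phi' (s_n x) (s_adj x)
    (fun j => relu (phi (s_n x) (s_adj x) (s_feat x) j)) (s_node x).

Definition gcn2_lin (R : realType) (m l : nat) (phi : aggregation R m l)
  (phi' : aggregation_R R l) (x : sample R m) : R :=
  2^-1 * phi' (s_n x) (s_adj x) (phi (s_n x) (s_adj x) (s_feat x)) (s_node x).

Definition gcn2_lin_proj (R : realType) (m l : nat) (Pm : 'M[R]_m)
  (phi : aggregation R m l) (phi' : aggregation_R R l) (x : sample R m) : R :=
  2^-1 * phi' (s_n x) (s_adj x)
    (phi (s_n x) (s_adj x) (fun j => s_feat x j *m Pm)) (s_node x).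

Definition sigmoid (R : realType) (z : R) : R := (1 + expR (- z))^-1.

Definition prob_cls (R : realType) (b : bool) (z : R) : R :=
  if b then sigmoid z else 1 - sigmoid z.

Definition cost_fun (R : realType) (m : nat) (y : sample R m -> R)
  (x : sample R m) : \bar R :=
  (- ln (prob_cls (cls_val x) (y x)))%:E.

Definition cost (R : realType) (m : nat) (G : set (set (sample R m)))
  (P : probability (g_sigma_algebraType G) R) (y : sample R m -> R) : \bar R :=
  (\int[P]_x cost_fun y x)%E.

Definition class_symmetric (R : realType) (m : nat) (G : set (set (sample R m)))
  (P : probability (g_sigma_algebraType G) R) : Prop :=
  forall F : set (g_sigma_algebraType G), measurable F ->
    measurable (neg_set F : set (g_sigma_algebraType G)) /\ P (neg_set F) = P F.

Definition symmetric_about (R : realType) (m : nat) (G : set (set (sample R m)))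
  (P : probability (g_sigma_algebraType G) R) (Pm : 'M[R]_m) : Prop :=
  forall F : set (g_sigma_algebraType G), measurable F ->
    measurable (refl_set Pm F : set (g_sigma_algebraType G)) /\
    P (refl_set Pm F) = P F.

(* "the cost of model y is finite" (integrand measurable and integrable) *)
Definition finite_cost (R : realType) (m : nat) (G : set (set (sample R m)))
  (P : probability (g_sigma_algebraType G) R) (y : sample R m -> R) : Prop :=
  P.-integrable [set: g_sigma_algebraType G] (cost_fun y).

From mathcomp Require Import all_boot all_order all_algebra.
From mathcomp Require Import all_classical all_reals all_analysis.
From mathcomp Require Import measurable_realfun lra.
Set Implicit Arguments.
Unset Strict Implicit.
Unset Printing Implicit Defensive.
Import Order.TTheory GRing.Theory Num.Theory.
Local Open Scope ring_scope.
Local Open Scope classical_set_scope.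

(* Both inequalities come from one averaging argument.  If tau is a
   measure-preserving involution of the sample space and the loss g of the
   smaller model satisfies g <= (f + f o tau) / 2 pointwise, where f is the
   loss of the larger model, then integrating gives C(small) <= C(large).
   For the first inequality tau is the negation x |-> -x: since
   ReLU(z) - ReLU(-z) = z, the linear approximation is the odd part
   L[y](x) = (y(x) - y(-x)) / 2, and the loss is convex in the logit and
   invariant under flipping both the logit and the class.  For the second
   inequality tau is the reflection R_S: since (I + R_S) / 2 = P_S, the
   projected model is the average of L[y] and L[y] o R_S, and the same
   convexity applies. *)

Lemma preimage_involutive {T : Type} {f : T -> T} :
  involutive f -> forall A, f @^-1` A = f @` A.
Proof.
move=> fK A; apply/seteqP; split=> x /=; first by move=> Ax; exists (f x).
by case=> y Ay <-; rewrite fK.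
Qed.

Lemma half_addee (R : realFieldType) (x : \bar R) :
  ((2^-1)%:E * (x + x) = x)%E.
Proof.
case: x => [r||] //=; last by rewrite mulrNy gtr0_sg ?invr_gt0 // mul1e.
  by rewrite -EFinD -EFinM mulrDr (mulrC 2^-1) -splitr.
by rewrite mulry gtr0_sg ?invr_gt0 // mul1e.
Qed.

Section MeasurePreservingInvolution.
Context (d : measure_display) (T : measurableType d) (R : realType).
Variables (mu : {measure set T -> \bar R}) (tau : T -> T).
Hypothesis tauK : involutive tau.
Hypothesis tau_preserving : forall A : set T, measurable A ->
  measurable (tau @` A) /\ mu (tau @` A) = mu A.

Lemma measurable_involution : measurable_fun setT tau.
Proof.
move=> _ A mA; rewrite setTI (preimage_involutive tauK).
by case: (tau_preserving mA).
Qed.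

Lemma ge0_integral_involution (f : T -> \bar R) :
  measurable_fun setT f -> (forall x, 0 <= f x)%E ->
  (\int[mu]_x f (tau x) = \int[mu]_x f x)%E.
Proof.
move=> mf f0; have mtau := measurable_involution.
symmetry; rewrite (eq_measure_integral (pushforward mu tau)); last first.
  move=> A mA _; have [_ <-] := tau_preserving mA.
  by congr (mu _); exact/esym/preimage_involutive.
by rewrite ge0_integral_pushforward ?preimage_setT.
Qed.

Lemma ge0_le_integral_average (f g : T -> \bar R) :
  measurable_fun setT f -> measurable_fun setT g ->
  (forall x, 0 <= f x)%E -> (forall x, 0 <= g x)%E ->
  (forall x, g x <= (2^-1)%:E * (f x + f (tau x)))%E ->
  (\int[mu]_x g x <= \int[mu]_x f x)%E.
Proof.
move=> mf mg f0 g0 gf.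
have mftau := measurableT_comp mf measurable_involution.
have mavg : measurable_fun setT (fun x => f x + f (tau x))%E.
  exact: emeasurable_funD.
apply: (@le_trans _ _ (\int[mu]_x ((2^-1)%:E * (f x + f (tau x))))%E).
  by apply: ge0_le_integral => //; exact: measurable_funeM.
rewrite ge0_integralZl_EFin ?invr_ge0 //; last by move=> x _; rewrite adde_ge0.
by rewrite ge0_integralD // ?ge0_integral_involution ?half_addee.
Qed.

End MeasurePreservingInvolution.

Definition softplus (R : realType) (t : R) : R := ln (1 + expR t).

Lemma softplus_ge0 (R : realType) (t : R) : 0 <= softplus t.
Proof. by rewrite ln_ge0 // lerDl expR_ge0. Qed.

Lemma softplus_midpoint (R : realType) (a b : R) :
  softplus (2^-1 * (a + b)) <= 2^-1 * (softplus a + softplus b).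
Proof.
set s := expR (2^-1 * a); set t := expR (2^-1 * b).
have s_gt0 : 0 < s by exact: expR_gt0.
have t_gt0 : 0 < t by exact: expR_gt0.
have expR_twice (c : R) : expR c = expR (2^-1 * c) ^+ 2.
  by rewrite -expRM_natl mulrA divff ?mul1r // pnatr_eq0.
rewrite /softplus mulrDr expRD (expR_twice a) (expR_twice b) -/s -/t.
have two_neq0 : (2 : R) != 0 by rewrite pnatr_eq0.
rewrite -[X in X <= _](mulKf two_neq0) ler_wpM2l ?invr_ge0 ?ler0n //.
rewrite mulr_natl -lnXn ?addr_gt0 ?mulr_gt0 //.
rewrite -lnM ?posrE ?addr_gt0 ?exprn_gt0 //.
rewrite ler_ln ?posrE ?mulr_gt0 ?addr_gt0 ?exprn_gt0 ?mulr_gt0 //.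
(* (1 + s t)^2 <= (1 + s^2) (1 + t^2): the difference is (s - t)^2 *)
have := sqr_ge0 (s - t); nra.
Qed.

Lemma oneB_sigmoid (R : realType) (z : R) : 1 - sigmoid z = sigmoid (- z).
Proof.
rewrite /sigmoid opprK expRN; set e := expR z.
have e_neq0 : e != 0 by rewrite gt_eqF ?expR_gt0.
have d_neq0 : 1 + e != 0 by rewrite gt_eqF ?addr_gt0 ?expR_gt0.
have -> : 1 + e^-1 = (1 + e) / e by rewrite mulrDl divff // mul1r addrC.
by rewrite invf_div -[X in X - _](divff d_neq0) -mulrBl addrK mul1r.
Qed.

Lemma ln_sigmoid (R : realType) (z : R) : - ln (sigmoid z) = softplus (- z).
Proof. by rewrite lnV ?opprK // posrE addr_gt0 ?expR_gt0. Qed.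

Definition cls_loss (R : realType) (b : bool) (z : R) : R := - ln (prob_cls b z).

Lemma cls_lossE (R : realType) (b : bool) (z : R) :
  cls_loss b z = softplus (if b then - z else z).
Proof.
by rewrite /cls_loss /prob_cls; case: b; rewrite ?oneB_sigmoid ln_sigmoid ?opprK.
Qed.

Lemma cls_loss_ge0 (R : realType) (b : bool) (z : R) : 0 <= cls_loss b z.
Proof. by rewrite cls_lossE softplus_ge0. Qed.

Lemma cls_lossN (R : realType) (b : bool) (z : R) :
  cls_loss b (- z) = cls_loss (~~ b) z.
Proof. by rewrite !cls_lossE; case: b; rewrite ?opprK. Qed.

Lemma cls_loss_midpoint (R : realType) (b : bool) (z1 z2 : R) :
  cls_loss b (2^-1 * (z1 + z2)) <= 2^-1 * (cls_loss b z1 + cls_loss b z2).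
Proof.
rewrite !cls_lossE; case: b; last exact: softplus_midpoint.
by rewrite -mulrN opprD; exact: softplus_midpoint.
Qed.

Lemma mulmx_trmx_self_eq0 (R : realDomainType) (m : nat) (v : 'rV[R]_m) :
  v *m v^T = 0 -> v = 0.
Proof.
move=> /(congr1 (fun A : 'M[R]_1 => A 0 0)); rewrite !mxE => /eqP.
rewrite psumr_eq0 => [/allP v0|i _]; last by rewrite !mxE -expr2 sqr_ge0.
apply/rowP => k; have := v0 k (mem_index_enum _).
by rewrite !mxE mulf_eq0 orbb => /eqP.
Qed.

Lemma orth_proj_id (R : realType) (m : nat) (S Pm : 'M[R]_m) :
  is_orth_proj S Pm -> forall a : 'rV_m, (a <= S)%MS -> a *m Pm = a.
Proof.
move=> HP a aS; have [aPS orthS] := HP a.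
have resS : (a - a *m Pm <= S)%MS by rewrite addmx_sub // eqmx_opp.
by apply/eqP; rewrite eq_sym -subr_eq0; apply/eqP/mulmx_trmx_self_eq0/orthS.
Qed.

Lemma orth_proj_idem (R : realType) (m : nat) (S Pm : 'M[R]_m) :
  is_orth_proj S Pm -> Pm *m Pm = Pm.
Proof.
move=> HP; apply/row_matrixP => i; rewrite row_mul.
by apply: (orth_proj_id HP); rewrite rowE; case: (HP (delta_mx 0 i)).
Qed.

Lemma reflection_mxK (R : pzRingType) (m : nat) (Pm : 'M[R]_m) :
  Pm *m Pm = Pm -> (Pm - (1%:M - Pm)) *m (Pm - (1%:M - Pm)) = 1%:M.
Proof.
move=> Pm_idem; rewrite !(mulmxBl, mulmxBr) !(mulmx1, mul1mx) Pm_idem.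
by rewrite !subrr !subr0 addrAC subrr add0r opprK addrC subrK.
Qed.

Lemma neg_sampleK (R : realType) (m : nat) : involutive (@neg_sample R m).
Proof.
by case=> n G i v X; rewrite /neg_sample /=; congr Sample; apply: funext => j;
  rewrite ?negbK ?opprK.
Qed.

Lemma refl_sampleK (R : realType) (m : nat) (Pm : 'M[R]_m) :
  Pm *m Pm = Pm -> involutive (refl_sample Pm).
Proof.
move=> Pm_idem; case=> n G i v X; rewrite /refl_sample /=; congr Sample.
by apply: funext => j; rewrite -mulmxA reflection_mxK // mulmx1.
Qed.

Lemma lin_unbiasedN (R : realType) (m l : nat) (phi : aggregation R m l) :
  lin_unbiased phi -> forall n (G : rel 'I_n) (X : 'I_n -> 'rV_m) (j : 'I_n),
  phi n G (fun k => - X k) j = - phi n G X j.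
Proof.
move=> Hphi n G X j.
have phi0 : phi n G (fun=> 0) j = 0.
  by apply: (@addrI _ (phi n G (fun=> 0) j)); rewrite -Hphi !addr0.
by apply/eqP; rewrite -addr_eq0 -Hphi (funext (fun k => addNr (X k))) phi0.
Qed.

Lemma relu_subN (R : realType) (l : nat) (u : 'rV[R]_l) : relu u - relu (- u) = u.
Proof.
apply/rowP => k; rewrite !mxE; have [u_ge0|u_lt0] := leP 0 (u 0 k).
  by rewrite max_r ?subr0 // oppr_le0.
by rewrite max_l ?sub0r ?opprK // oppr_ge0 ltW.
Qed.

Section TwoLayerGCN.
Variables (R : realType) (m l : nat).
Variables (phi : aggregation R m l) (phi' : aggregation_R R l).
Hypotheses (Hphi : lin_unbiased phi) (Hphi' : lin_unbiased_R phi').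

Lemma gcn2_lin_odd_part (x : sample R m) :
  gcn2_lin phi phi' x = 2^-1 * (gcn2 phi phi' x - gcn2 phi phi' (neg_sample x)).
Proof.
rewrite /gcn2_lin /gcn2 /=; set Y := @phi (s_n x) (s_adj x) (s_feat x).
have reluY : (fun j => relu (Y j)) = (fun j => Y j + relu (- Y j)).
  by apply: funext => j; rewrite -{2}(relu_subN (Y j)) subrK.
rewrite (funext (lin_unbiasedN Hphi (s_adj x) (s_feat x))) -/Y reluY Hphi'.
by rewrite addrK.
Qed.

Lemma gcn2_lin_proj_average (Pm : 'M[R]_m) (x : sample R m) :
  gcn2_lin_proj Pm phi phi' x =
    2^-1 * (gcn2_lin phi phi' x + gcn2_lin phi phi' (refl_sample Pm x)).
Proof.
rewrite /gcn2_lin_proj /gcn2_lin /= -mulrDr -Hphi'.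
have sum_refl : (fun j => s_feat x j + s_feat x j *m (Pm - (1%:M - Pm))) =
                (fun j => s_feat x j *m Pm + s_feat x j *m Pm).
  by apply: funext => j; rewrite !mulmxBr mulmx1 opprB addrC -addrA subrK.
rewrite -(funext (Hphi _ _ _)) sum_refl (funext (Hphi _ _ _)) Hphi'.
by rewrite (mulrC 2^-1 (_ + _)) mulrDl -splitr.
Qed.

Variable (G : set (set (sample R m))).
Variable (P : probability (g_sigma_algebraType G) R).

Lemma cost_fun_ge0 (y : sample R m -> R) (x : sample R m) : (0 <= cost_fun y x)%E.
Proof. by rewrite lee_fin; exact: cls_loss_ge0. Qed.

Lemma cost_gcn2_lin_le : class_symmetric P ->
  finite_cost P (gcn2 phi phi') -> finite_cost P (gcn2_lin phi phi') ->
  (cost P (gcn2_lin phi phi') <= cost P (gcn2 phi phi'))%E.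
Proof.
move=> Psym /measurable_int my /measurable_int mL; rewrite /cost.
apply: (ge0_le_integral_average (T := g_sigma_algebraType G)
          (@neg_sampleK R m) Psym my mL) => x;
  rewrite ?cost_fun_ge0 // /cost_fun -EFinD -EFinM lee_fin.
rewrite gcn2_lin_odd_part; apply: le_trans (cls_loss_midpoint _ _ _) _.
by rewrite cls_lossN.
Qed.

Lemma cost_gcn2_lin_proj_le (S Pm : 'M[R]_m) :
  is_orth_proj S Pm -> symmetric_about P Pm ->
  finite_cost P (gcn2_lin phi phi') ->
  finite_cost P (gcn2_lin_proj Pm phi phi') ->
  (cost P (gcn2_lin_proj Pm phi phi') <= cost P (gcn2_lin phi phi'))%E.
Proof.
move=> PmS Psym /measurable_int mL /measurable_int mLP; rewrite /cost.
have reflK := refl_sampleK (orth_proj_idem PmS).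
apply: (ge0_le_integral_average (T := g_sigma_algebraType G)
          reflK Psym mL mLP) => x;
  rewrite ?cost_fun_ge0 // /cost_fun -EFinD -EFinM lee_fin.
by rewrite gcn2_lin_proj_average; exact: cls_loss_midpoint.
Qed.

End TwoLayerGCN.

Theorem theorem2 (R : realType) (m l : nat)
  (G : set (set (sample R m))) (P : probability (g_sigma_algebraType G) R)
  (phi : aggregation R m l) (phi' : aggregation_R R l)
  (Hphi : lin_unbiased phi) (Hphi' : lin_unbiased_R phi') :
  (class_symmetric P ->
     finite_cost P (gcn2 phi phi') -> finite_cost P (gcn2_lin phi phi') ->
     (cost P (gcn2_lin phi phi') <= cost P (gcn2 phi phi'))%E) /\
  (forall S Pm : 'M[R]_m, is_orth_proj S Pm -> symmetric_about P Pm ->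
     finite_cost P (gcn2_lin phi phi') ->
     finite_cost P (gcn2_lin_proj Pm phi phi') ->
     (cost P (gcn2_lin_proj Pm phi phi') <= cost P (gcn2_lin phi phi'))%E).
Proof.
split; first exact: cost_gcn2_lin_le.
by move=> S Pm; exact: cost_gcn2_lin_proj_le.
Qed.
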